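(* The number of cyclic parking functions of length $n$ is $|\mathrm{CycPF}_n|=\sum_{i=0}^{n-1} i!\,(n-i)!$.
   Context: A parking preference is $p\in[n]^n$. Classical parking process: cars $1,\dots,n$ enter in order into spots $1,\dots,n$, initially unoccupied; car $i$ parks in the first unoccupied spot $k\ge p_i$ and fails if none. A classical parking function is a $p$ for which all cars park; its outcome is the permutation $\pi$ (one-line notation) with $\pi_k$ the car in spot $k$. For $i\in[n]$, $\mathrm{Inc}_i^n:=i(i+1)\cdots n\,12\cdots(i-1)$. A cyclic parking function is a classical parking function whose outcome equals $\mathrm{Inc}_i^n$ for some $i\in[n]$; $\mathrm{CycPF}_n$ is the set of these. *)

From mathcomp Require Import all_boot.
Set Warnings "-notation-overridden".


(* Conventions (0-indexed): cars, spots and preferences range over 'I_n,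
   i.e. the paper's value k corresponds to k-1 here. *)

(* State of the lot: spot k is [Some c] if car c parked there, [None] if empty.
   [None] as a whole state records that some car failed to park. *)
Definition park_state := option (seq (option nat)).

Definition first_free (s : seq (option nat)) (a : nat) : option nat :=
  let k := find (fun k => nth (Some 0) s k == None) (iota a (size s - a)) in
  if k < size s - a then Some (a + k) else None.

Definition park_step (st : park_state) (c a : nat) : park_state :=
  match st with
  | None => None
  | Some s => match first_free s a with
              | None => None
              | Some k => Some (set_nth None s k (Some c))
              end
  end.

Definition park_run (n : nat) (p : {ffun 'I_n -> 'I_n}) : park_state :=
  foldl (fun st (c : 'I_n) => park_step st c (p c)) (Some (nseq n None)) (enum 'I_n).

Definition outcome (n : nat) (p : {ffun 'I_n -> 'I_n}) : option (seq nat) :=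
  match park_run n p with
  | None => None
  | Some s => Some (map (odflt 0) s)
  end.

Definition is_parking_function (n : nat) (p : {ffun 'I_n -> 'I_n}) : bool :=
  outcome n p != None.

(* Inc_i^n = i (i+1) ... n 1 2 ... (i-1), 0-indexed: i, ..., n-1, 0, ..., i-1. *)
Definition Inc (n i : nat) : seq nat := iota i (n - i) ++ iota 0 i.

Definition is_cyclic_pf (n : nat) (p : {ffun 'I_n -> 'I_n}) : bool :=
  is_parking_function n p &&
  [exists i : 'I_n, outcome n p == Some (Inc n i)].

Definition CycPF (n : nat) : {set {ffun 'I_n -> 'I_n}} :=
  [set p | is_cyclic_pf n p].

From mathcomp Require Import all_boot zify.

(* Fix i < n (spots and cars 0-indexed).  In the outcome Inc_i, car c sits in
   spot [spot n i c] = n-i+c if c < i, and c-i otherwise.  Since cars enter in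
   order 0, 1, ..., the outcome is Inc_i exactly when every car c, on arrival,
   finds the lot in the state [lot n i c] (cars 0..c-1 in their Inc_i spots)
   and then parks in [spot n i c].  In that state the occupied spots just
   before [spot n i c] form a block starting at n-i (if c < i) or at 0 (if
   c >= i), so car c parks correctly iff its preference lies in a window of
   c+1, resp. c-i+1, consecutive spots ([window n i c]).

   The set [cyc_class n i] of such p is a product of windows, of size
   i! (n-i)!; the classes are disjoint (Inc_i starts with car i) and cover
   CycPF_n, which gives the formula. *)

Lemma first_free_some {s a k} : first_free s a = Some k ->
  [/\ a <= k, k < size s, nth None s k = None &
      forall j, a <= j < k -> nth None s j != None].
Proof.
rewrite /first_free; set r := iota _ _; set f := find _ _.
case: ifP => // f_lt [<-].
have has_free : has (fun k => nth (Some 0) s k == None) r.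
  by rewrite has_find size_iota.
have := nth_find 0 has_free; rewrite -/f nth_iota // => /eqP free_f.
split; [lia | lia | by rewrite (set_nth_default (Some 0)) //; lia |].
move=> j /andP [a_j j_lt]; have := before_find 0 (_ : j - a < f).
rewrite nth_iota; last by lia.
by rewrite subnKC // (set_nth_default (Some 0)) => [->|]; lia.
Qed.

Lemma first_free_none {s a} : first_free s a = None ->
  forall j, a <= j < size s -> nth None s j != None.
Proof.
rewrite /first_free; set r := iota _ _; set f := find _ _.
case: ifP => // f_ge _ j /andP [a_j j_lt].
have : ~~ has (fun k => nth (Some 0) s k == None) r.
  by rewrite has_find -/f; move: f_ge; rewrite size_iota => ->.
move/hasPn => /(_ j); rewrite mem_iota (set_nth_default (Some 0)) //.
by apply; lia.
Qed.

Lemma first_free_eq s a k : a <= k -> k < size s -> nth None s k = None ->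
  (forall j, a <= j < k -> nth None s j != None) -> first_free s a = Some k.
Proof.
move=> a_k k_lt free_k full_before.
case E: first_free => [k'|]; last first.
  by have := first_free_none E k; rewrite a_k k_lt free_k => /(_ isT).
have [a_k' _ free_k' full_before'] := first_free_some E.
case: (ltngtP k k') => [lt|lt|-> //].
- by have := full_before' k; rewrite a_k lt free_k => /(_ isT).
- by have := full_before k'; rewrite a_k' lt free_k' => /(_ isT).
Qed.

(* Preference of car c, extended by 0 to all naturals so that the process can
   be followed one car (a natural number) at a time. *)
Definition pref n (p : {ffun 'I_n -> 'I_n}) (c : nat) : nat :=
  odflt 0 (omap (fun c' : 'I_n => val (p c')) (insub c)).

Lemma prefE n p (c : 'I_n) : pref n p c = p c.
Proof. by rewrite /pref valK. Qed.

Definition run n p m : park_state :=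
  foldl (fun st c => park_step st c (pref n p c)) (Some (nseq n None)) (iota 0 m).

Lemma park_run_run n p : park_run n p = run n p n.
Proof.
rewrite /park_run /run -val_enum_ord.
by elim: (enum 'I_n) (Some _) => //= c s IH st; rewrite prefE IH.
Qed.

Lemma run_succ n p m : run n p m.+1 = park_step (run n p m) m (pref n p m).
Proof. by rewrite /run -addn1 iotaD foldl_cat. Qed.

Lemma run_failed {n p m m'} : m <= m' -> run n p m = None -> run n p m' = None.
Proof.
move=> le_mm'; rewrite /run -(subnKC le_mm') iotaD foldl_cat => ->.
by elim: (iota _ _).
Qed.

Definition holds (k c : nat) (st : park_state) : bool :=
  if st is Some s then (k < size s) && (nth None s k == Some c) else true.

(* A parked car never moves: entering cars only fill empty spots. *)
Lemma holds_park_step k c st c' a : holds k c st -> holds k c (park_step st c' a).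
Proof.
case: st => [s|] //= /andP [k_lt /eqP s_k].
case E: first_free => [k'|] //=; have [_ _ free_k' _] := first_free_some E.
have k_k' : (k == k') = false by apply/negbTE/eqP => e; move: free_k'; rewrite -e s_k.
by rewrite size_set_nth nth_set_nth /= k_k' s_k eqxx leq_max k_lt orbT.
Qed.

Lemma holds_run {n p m m' k c} : m <= m' -> holds k c (run n p m) -> holds k c (run n p m').
Proof.
move=> le_mm'; rewrite /run -(subnKC le_mm') iotaD foldl_cat.
elim: (iota _ _) (foldl _ _ _) => //= c' s IH st st_k.
by apply: IH; apply: holds_park_step.
Qed.

Lemma card_interval n lo hi : lo <= hi -> hi <= n ->
  #|[pred a : 'I_n | lo <= a < hi]| = hi - lo.
Proof.
move=> lo_hi hi_n; rewrite -sum1_card.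
rewrite (eq_bigl (fun a : 'I_n => (a < hi) && (lo <= a))); last by move=> a /=; rewrite andbC.
rewrite -(big_geq_mkord lo n (fun a => a < hi) (fun _ => 1)).
by rewrite -(big_nat_widen _ _ _ predT) // sum_nat_const_nat muln1.
Qed.

Lemma card_ffun_family (aT rT : finType) (F : aT -> pred rT) :
  #|[set f : {ffun aT -> rT} | [forall x, f x \in F x]]| = \prod_x #|F x|.
Proof.
have := card_family F; rewrite foldrE big_map big_enum => <-.
by apply: eq_card => f; rewrite inE; apply/forallP/familyP.
Qed.

Lemma prod_fact {n i} : i <= n ->
  \prod_(c < n) (if c < i then c.+1 else (c - i).+1) = i`! * (n - i)`!.
Proof.
move=> i_le; rewrite -(big_mkord predT (fun c => if c < i then c.+1 else (c - i).+1)).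
rewrite (big_cat_nat (leq0n i) i_le) /=.
rewrite (@eq_big_nat _ _ _ 0 i _ (fun c => c.+1)); last by move=> c /andP [_ ->].
rewrite (@eq_big_nat _ _ _ i n _ (fun c => (c - i).+1)); last first.
  by move=> c /andP [i_c _]; rewrite ltnNge i_c.
have := big_addn 0 n i predT (fun c => (c - i).+1); rewrite add0n => ->.
rewrite !fact_prod !big_add1 /=; congr (_ * _).
by apply: eq_big_nat => c _ /=; lia.
Qed.

Section IncOutcome.

Variables n i : nat.
Hypothesis i_lt_n : i < n.

Definition spot (c : nat) : nat := if c < i then n - i + c else c - i.

Definition lot_entry (m k : nat) : option nat :=
  if n - i <= k then (if k - (n - i) < m then Some (k - (n - i)) else None)
  else if k < m - i then Some (i + k) else None.
Definition lot (m : nat) : seq (option nat) := mkseq (lot_entry m) n.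

Definition window (c a : nat) : bool :=
  if c < i then (n - i <= a) && (a <= n - i + c) else a <= c - i.

Lemma size_lot m : size (lot m) = n.
Proof. exact: size_mkseq. Qed.

Lemma nth_lot m k : k < n -> nth None (lot m) k = lot_entry m k.
Proof. exact: nth_mkseq. Qed.

Lemma lot0 : lot 0 = nseq n None.
Proof.
apply: (@eq_from_nth _ None); first by rewrite size_lot size_nseq.
move=> k; rewrite size_lot => k_lt; rewrite nth_lot // nth_nseq k_lt /lot_entry.
by repeat case: ifP => ? //; lia.
Qed.

Lemma spot_lt {c} : c < n -> spot c < n.
Proof. by rewrite /spot; case: ifP; lia. Qed.

Lemma lot_park c : c < n -> set_nth None (lot c) (spot c) (Some c) = lot c.+1.
Proof.
move=> c_lt; have spot_c := spot_lt c_lt.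
apply: (@eq_from_nth _ None); first by rewrite size_set_nth !size_lot; lia.
move=> k; rewrite size_set_nth size_lot (maxn_idPr spot_c) => k_lt.
rewrite nth_set_nth /= !nth_lot // /lot_entry /spot.
case: (ltnP c i) => c_i /=; case: (k =P _) => [->|ne];
  repeat case: ifP => ?; try done; try (congr Some; lia); lia.
Qed.

Lemma first_free_lot c a : c < n ->
  first_free (lot c) a = Some (spot c) <-> window c a.
Proof.
move=> c_lt; have spot_c := spot_lt c_lt; split.
  move=> /first_free_some [a_spot _ _ full_before].
  move: a_spot; rewrite /window /spot; case: ifP => // c_i a_spot.
  rewrite a_spot andbT leqNgt; apply/negP => a_lt.
  have := full_before (n - i).-1; rewrite nth_lot; last by lia.
  rewrite /lot_entry /spot c_i; have -> : (n - i <= (n - i).-1) = false by lia.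
  have -> : ((n - i).-1 < c - i) = false by lia.
  by move=> full; suff : false by []; apply: full; lia.
move=> win; apply: first_free_eq; rewrite ?size_lot ?nth_lot //.
- by move: win; rewrite /window /spot; case: ifP; lia.
- by move: win; rewrite /window /lot_entry /spot; case: (ltnP c i) => _ win;
    repeat case: ifP => ?; try done; lia.
move=> j /andP [a_j j_lt]; rewrite nth_lot; last by lia.
move: win j_lt; rewrite /window /lot_entry /spot; case: (ltnP c i) => _ win j_lt;
  by repeat case: ifP => ? //; lia.
Qed.

Lemma nth_Inc k : k < n -> nth 0 (Inc n i) k = if k < n - i then i + k else k - (n - i).
Proof.
move=> k_lt; rewrite /Inc nth_cat size_iota.
by case: ifP => ?; rewrite nth_iota //; lia.
Qed.

Lemma Inc_spot k c : k < n -> nth 0 (Inc n i) k = c -> k = spot c.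
Proof. by move=> k_lt; rewrite nth_Inc // /spot; case: ifP => ? <-; case: ifP; lia. Qed.

Lemma lot_outcome : map (odflt 0) (lot n) = Inc n i.
Proof.
apply: (@eq_from_nth _ 0).
  by rewrite size_map size_lot /Inc size_cat !size_iota; lia.
move=> k; rewrite size_map size_lot => k_lt.
rewrite (nth_map None) ?size_lot // nth_lot // nth_Inc // /lot_entry.
by repeat case: ifP => ? //=; lia.
Qed.

Lemma run_lot_succ {p c} : c < n -> run n p c = Some (lot c) ->
  window c (pref n p c) -> run n p c.+1 = Some (lot c.+1).
Proof.
move=> c_lt run_c win; rewrite run_succ run_c /=.
by rewrite (proj2 (first_free_lot _ _ c_lt) win) lot_park.
Qed.

(* Conversely, if the final outcome is Inc_i and the cars so far follow
   Inc_i, then car c's preference is in its window: car c must park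
   somewhere, and since it never moves again, that spot is [spot c]. *)
Lemma window_of_outcome {p c} : c < n -> outcome n p = Some (Inc n i) ->
  run n p c = Some (lot c) -> window c (pref n p c).
Proof.
move=> c_lt; rewrite /outcome park_run_run.
case run_n: (run n p n) => [s|] // [s_Inc] run_c.
have run_c1 := run_succ n p c; rewrite run_c /= in run_c1.
case ff: (first_free _ _) run_c1 => [k|] run_c1; last first.
  by move: run_n; rewrite (run_failed c_lt) ?run_c1.
have [_ k_lt _ _] := first_free_some ff; rewrite size_lot in k_lt.
have : holds k c (run n p n).
  apply: (holds_run c_lt); rewrite run_c1 /= nth_set_nth /= eqxx.
  by rewrite size_set_nth size_lot leq_max k_lt orbT eqxx.
rewrite run_n /= => /andP [k_lt_s /eqP s_k].
have k_spot : k = spot c.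
  by apply: (@Inc_spot k c k_lt); rewrite -s_Inc (nth_map None) // s_k.
by apply/(first_free_lot _ _ c_lt); rewrite -k_spot.
Qed.

Lemma outcome_IncP (p : {ffun 'I_n -> 'I_n}) :
  outcome n p = Some (Inc n i) <-> forall c : 'I_n, window c (p c).
Proof.
split=> [out c | win].
  have run_lot m : m <= n -> run n p m = Some (lot m).
    elim: m => [|m IH] m_le; first by rewrite /run /= lot0.
    have run_m : run n p m = Some (lot m) by apply: IH; lia.
    exact: run_lot_succ m_le run_m (window_of_outcome m_le out run_m).
  by rewrite -prefE; apply: window_of_outcome out (run_lot _ (ltnW _)).
have run_lot m : m <= n -> run n p m = Some (lot m).
  elim: m => [|m IH] m_le; first by rewrite /run /= lot0.
  apply: (run_lot_succ m_le (IH (ltnW m_le))).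
  by have := win (Ordinal m_le); rewrite -prefE.
by rewrite /outcome park_run_run run_lot // lot_outcome.
Qed.

Lemma card_window (c : 'I_n) :
  #|[pred a : 'I_n | window c a]| = if c < i then c.+1 else (c - i).+1.
Proof.
move: (ltn_ord c) => c_lt; rewrite /window; case: ifP => c_i.
  transitivity #|[pred a : 'I_n | n - i <= a < n - i + c.+1]|.
    by apply: eq_card => a; rewrite !inE; lia.
  by rewrite card_interval; lia.
transitivity #|[pred a : 'I_n | 0 <= a < (c - i).+1]|.
  by apply: eq_card => a; rewrite !inE; lia.
by rewrite card_interval; lia.
Qed.

Definition cyc_class : {set {ffun 'I_n -> 'I_n}} :=
  [set p : {ffun 'I_n -> 'I_n} | [forall c : 'I_n, window c (p c)]].

Lemma card_cyc_class : #|cyc_class| = i`! * (n - i)`!.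
Proof.
have -> : cyc_class = [set p : {ffun 'I_n -> 'I_n} |
                        [forall c, p c \in [pred a : 'I_n | window c a]]].
  by apply/setP => p; rewrite !inE.
rewrite card_ffun_family -(prod_fact (ltnW i_lt_n)).
by apply: eq_bigr => c _; apply: card_window.
Qed.

Lemma mem_cyc_class p : (p \in cyc_class) = (outcome n p == Some (Inc n i)).
Proof. by rewrite inE; apply/forallP/eqP => /outcome_IncP. Qed.

End IncOutcome.

(* Inc_i starts with car i, so different i give different outcomes. *)
Lemma Inc_inj {n i j} : i < n -> j < n -> Inc n i = Inc n j -> i = j.
Proof.
move=> i_lt j_lt Inc_ij.
have head_Inc k : k < n -> nth 0 (Inc n k) 0 = k.
  by move=> k_lt; rewrite nth_Inc //; [case: ifP; lia | lia].
by rewrite -(head_Inc i i_lt) Inc_ij head_Inc.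
Qed.

Lemma cyc_class_disjoint n (i j : 'I_n) :
  i != j -> [disjoint cyc_class n i & cyc_class n j].
Proof.
move=> i_j; apply/pred0P => p /=; rewrite !mem_cyc_class //.
apply/andP => -[/eqP -> /eqP [/(Inc_inj (ltn_ord i) (ltn_ord j))]].
by move/val_inj/eqP; rewrite (negbTE i_j).
Qed.

Lemma CycPF_bigcup n : CycPF n = \bigcup_(i : 'I_n) cyc_class n i.
Proof.
apply/setP => p; rewrite inE /is_cyclic_pf; apply/andP/bigcupP.
  by case=> _ /existsP [i /eqP out]; exists i; rewrite // mem_cyc_class // out.
case=> i _; rewrite mem_cyc_class // => /eqP out.
by split; [rewrite /is_parking_function out | apply/existsP; exists i; rewrite out].
Qed.

Theorem corollary3p3 (n : nat) :
  #|CycPF n| = \sum_(0 <= i < n) i`! * (n - i)`!.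
Proof.
rewrite CycPF_bigcup -sum1_card partition_disjoint_bigcup; last exact: cyc_class_disjoint.
by rewrite big_mkord; apply: eq_bigr => i _; rewrite sum1_card card_cyc_class.
Qed.
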